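(* Consider $$u_i'=\mu\sum_{j=1}^nL_{ij}u_j+u_i(p_i-u_i-v_i),\qquad v_i'=\mu\sum_{j=1}^nL_{ij}v_j+v_i(q_i-u_i-v_i),\qquad i=1,\dots,n,$$ with $\mu>0$, $p,q\gg0$, and assume (A2)–(A3). Let $\Omega_u=\{i:p_i>q_i\}$ and $\Omega_v=\{i:p_i<q_i\}$, and suppose both are nonempty and $\Omega_u\cup\Omega_v=\{1,\dots,n\}$. Define $u_0,v_0\in\mathbb R^n$ by $u_{0i}=p_i$, $v_{0i}=0$ for $i\in\Omega_u$ and $u_{0i}=0$, $v_{0i}=q_i$ for $i\in\Omega_v$. For $\mu>0$ small, let $(u,v)=(u(\mu),v(\mu))$ be the unique positive equilibrium of the system. Then $\lim_{\mu\to0^+}(u(\mu),v(\mu))=(u_0,v_0)$.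
   Context: Let $n\ge2$ and $A=(a_{ij})_{n\times n}$ with $a_{ij}\ge0$ for $i\ne j$. The connection matrix $L$ has $L_{ij}=a_{ij}$ for $i\ne j$, $L_{ii}=-\sum_{k\ne i}a_{ki}$. The weighted digraph $\mathcal G$ associated with $A$ has vertices $\{1,\dots,n\}$ and, for $i\ne j$, an arc $(i,j)$ iff $a_{ji}>0$, with weight $a_{ji}$. A cycle is a list of distinct vertices $i_1,\dots,i_k$, $k\ge2$, with arcs $(i_m,i_{m+1})$, $m<k$, and $(i_k,i_1)$; its weight is the product of its arc weights; its reverse has all arcs reversed. $\mathcal G$ is cycle-balanced if for every cycle its reverse is also a cycle of $\mathcal G$ with the same weight. (A2): $L$ is irreducible. (A3): $\mathcal G$ is cycle-balanced. Under these hypotheses (since $p\not\ge q$ and $q\not\ge p$) the system has, for all sufficiently small $\mu>0$, a unique positive equilibrium. *)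

From HB Require Import structures.
From mathcomp Require Import all_boot all_order all_algebra.
From mathcomp Require Import reals.
Set Implicit Arguments. Unset Strict Implicit. Unset Printing Implicit Defensive.
Import Order.TTheory GRing.Theory Num.Theory.
Local Open Scope ring_scope.

Section Defs.
Variables (R : realType) (n : nat).
Implicit Types (a : 'I_n -> 'I_n -> R) (s : seq 'I_n).

Definition conn_matrix a : 'M[R]_n :=
  \matrix_(i, j) (if i == j then - \sum_(k | k != i) a k i else a i j).

Definition irreducible_mx (M : 'M[R]_n) : Prop :=
  forall S : {set 'I_n}, S != set0 -> S != [set: 'I_n] ->
    exists i j, [/\ i \in S, j \notin S & M i j != 0].

(* digraph G: arc (i,j) iff i <> j and a_ji > 0, with weight a_ji *)
Definition arc a (i j : 'I_n) : bool := (i != j) && (0 < a j i).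

Definition is_cycle a s : bool := [&& uniq s, (2 <= size s)%N & cycle (arc a) s].

Definition cycle_weight a s : R := \prod_(x <- s) a (next s x) x.

Definition cycle_balanced a : Prop :=
  forall s, is_cycle a s -> is_cycle a (rev s) /\ cycle_weight a (rev s) = cycle_weight a s.

Definition is_equilibrium a (p q : 'I_n -> R) (mu : R) (u v : 'I_n -> R) : Prop :=
  forall i,
    mu * (\sum_j conn_matrix a i j * u j) + u i * (p i - u i - v i) = 0 /\
    mu * (\sum_j conn_matrix a i j * v j) + v i * (q i - u i - v i) = 0.

Definition positive_vec (w : 'I_n -> R) : Prop := forall i, 0 < w i.

Definition is_pos_equilibrium a p q mu u v : Prop :=
  is_equilibrium a p q mu u v /\ positive_vec u /\ positive_vec v.

Definition u0 (p q : 'I_n -> R) : 'I_n -> R := fun i => if q i < p i then p i else 0.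
Definition v0 (p q : 'I_n -> R) : 'I_n -> R := fun i => if p i < q i then q i else 0.

End Defs.

From HB Require Import structures.
From mathcomp Require Import all_boot all_order all_algebra.
From mathcomp Require Import reals ring lra.
From Stdlib Require Import FunctionalExtensionality.
Import Order.TTheory GRing.Theory Num.Theory.
Local Open Scope ring_scope.
Set Implicit Arguments. Unset Strict Implicit. Unset Printing Implicit Defensive.

(* At every site exactly one species "dominates" (has the larger resource).
   The proof has three parts.
   1. A priori localization (equilibrium_localized): by a maximum principle
      positive equilibria are bounded uniformly in mu <= 1, and then the site
      equations force, for mu small, the dominant density within rho of its
      resource and the other density within rho of 0.
   2. Existence and uniqueness (unique_pos_equilibrium): solving each site
      equation for the own density gives a map `update` which, for mu small,
      maps a box around the limiting profile into itself and halves a weighted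
      sup-distance; Banach's theorem on a box (BoxContraction) yields a unique
      fixed point there.  Fixed points are equilibria, positive by
      irreducibility, and by part 1 every positive equilibrium is in the box.
   3. Convergence (equilibrium_limit) is part 1 with rho = eps / 2. *)

(* The candidate limit of a real sequence x with Cauchy rate e: the supremum
   of its lower envelopes x k - e k. *)
Definition rate_limit (R : realType) (x e : nat -> R) : R :=
  sup (fun y : R => exists k, y = x k - e k).

Lemma rate_limitP (R : realType) (x e : nat -> R) :
  (forall k m, (k <= m)%N -> `|x m - x k| <= e k) ->
  forall k, `|rate_limit x e - x k| <= e k.
Proof.
move=> Hx k; pose S := fun y : R => exists k, y = x k - e k.
have lower_le_upper j y : S y -> y <= x j + e j.
  move=> [i ->].
  have /ler_normlP [? ?] := Hx i (maxn j i) (leq_maxr _ _).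
  have /ler_normlP [? ?] := Hx j (maxn j i) (leq_maxl _ _).
  lra.
apply/ler_normlP; split.
- have : x k - e k <= sup S.
    apply: ub_le_sup; last by exists k.
    by exists (x 0%N + e 0%N) => y /lower_le_upper.
  rewrite /rate_limit -/S; lra.
- have : sup S <= x k + e k.
    apply: ge_sup; first by exists (x 0%N - e 0%N), 0%N.
    by move=> y /lower_le_upper.
  rewrite /rate_limit -/S; lra.
Qed.

Lemma geometric_small (R : realType) (c e : R) : 0 < e -> exists k : nat, c / 2 ^+ k < e.
Proof.
move=> e0; have [c0|c0] := lerP c 0.
  by exists 0%N; rewrite expr0 divr1; lra.
have ce0 : 0 <= c / e by rewrite divr_ge0 // ltW.
exists (Num.Def.archi_bound (c / e)); set k := Num.Def.archi_bound _.
have ltk : c / e < k%:R := archi_boundP ce0.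
have k_lt_pow : (k%:R : R) < 2 ^+ k by rewrite -natrX ltr_nat ltn_expl.
have pow0 : 0 < (2 : R) ^+ k by rewrite exprn_gt0.
by rewrite ltr_pdivrMr // -ltr_pdivrMl // mulrC; lra.
Qed.

Lemma le_of_geometric (R : realType) (x y c : R) :
  (forall k : nat, x <= y + c / 2 ^+ k) -> x <= y.
Proof.
move=> H; rewrite leNgt; apply/negP => yx.
have [k hk] := @geometric_small R c (x - y) ltac:(rewrite subr_gt0 //).
have := H k; lra.
Qed.

(* Banach's fixed-point theorem in the form needed here: a map F on a box
   [lo, hi] of R^T that halves the weighted sup-distance (weights w) has
   exactly one fixed point in the box. *)
Section BoxContraction.
Variables (R : realType) (T : Type) (lo hi w : T -> R) (D0 : R).
Variable F : (T -> R) -> (T -> R).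

Definition in_box (x : T -> R) := forall t, lo t <= x t <= hi t.
Definition close (x y : T -> R) (D : R) := forall t, `|x t - y t| <= D * w t.

Hypothesis D0_ge0 : 0 <= D0.
Hypothesis box_diam : forall x y, in_box x -> in_box y -> close x y D0.
Hypothesis F_box : forall x, in_box x -> in_box (F x).
Hypothesis F_contr : forall x y D, in_box x -> in_box y -> 0 <= D ->
  close x y D -> close (F x) (F y) (D / 2).

Lemma iter_box k x : in_box x -> in_box (iter k F x).
Proof. by move=> Bx; elim: k => [|k IH] //=; apply: F_box. Qed.

Lemma iter_close k x y : in_box x -> in_box y ->
  close (iter k F x) (iter k F y) (D0 / 2 ^+ k).
Proof.
move=> Bx By; elim: k => [|k IH] /=; first by rewrite expr0 divr1; exact: box_diam.
rewrite exprSr invfM mulrA.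
apply: F_contr IH; rewrite ?divr_ge0 ?exprn_ge0 //; exact: iter_box.
Qed.

Lemma close_geometric_eq x y :
  (forall k, close x y (D0 / 2 ^+ k)) -> x = y.
Proof.
move=> H; apply: functional_extensionality => t; apply/eqP; rewrite -subr_eq0.
rewrite -normr_le0; apply: (@le_of_geometric _ _ _ (D0 * w t)) => k.
by rewrite add0r mulrAC; exact: H.
Qed.

Lemma box_fixpoint_unique x y : in_box x -> in_box y -> F x = x -> F y = y -> x = y.
Proof.
move=> Bx By Fx Fy; apply: close_geometric_eq => k.
have fixed z : F z = z -> iter k F z = z by move=> Fz; elim: k => //= k ->.
by rewrite -(fixed x Fx) -(fixed y Fy); exact: iter_close.
Qed.

Lemma box_fixpoint_exists x0 : in_box x0 -> exists x, in_box x /\ F x = x.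
Proof.
move=> B0; pose xs k := iter k F x0.
have xs_cauchy t k m : (k <= m)%N -> `|xs m t - xs k t| <= D0 / 2 ^+ k * w t.
  move=> km; rewrite /xs -(subnKC km) iterD distrC.
  exact: (iter_close k B0 (iter_box _ B0) t).
pose l_at t := rate_limit (xs^~ t) (fun k => D0 / 2 ^+ k * w t).
have Hl t k : `|l_at t - xs k t| <= D0 / 2 ^+ k * w t.
  exact: rate_limitP (xs_cauchy t) k.
have Bl : in_box l_at.
  move=> t; apply/andP; split; apply: (@le_of_geometric _ _ _ (D0 * w t)) => k;
    have /andP [? ?] : lo t <= xs k t <= hi t := iter_box k B0 t; have /ler_normlP [? ?] := Hl t k;
    rewrite mulrAC; lra.
exists l_at; split => //; apply: close_geometric_eq => k t.
have step : close (F l_at) (xs k.+1) (D0 / 2 ^+ k / 2).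
  by apply: F_contr (Hl^~ k) => //; [exact: iter_box | rewrite divr_ge0 ?exprn_ge0].
have half : D0 / 2 ^+ k.+1 = D0 / 2 ^+ k / 2 by rewrite exprSr invfM mulrA.
have /ler_normlP [? ?] := step t.
have := Hl t k.+1; rewrite half => /ler_normlP [? ?].
by apply/ler_normlP; split; lra.
Qed.

End BoxContraction.

Section Dispersal.
Variables (R : realType) (n : nat) (a : 'I_n -> 'I_n -> R).

Definition inflow (w : 'I_n -> R) i := \sum_(j | j != i) a i j * w j.
Definition outrate i := \sum_(k | k != i) a k i.
(* A common bound for all row and column sums of |a|. *)
Definition dispersal_bound := \sum_i \sum_j `|a i j|.

Lemma conn_matrix_mulE w i :
  \sum_j conn_matrix a i j * w j = inflow w i - outrate i * w i.
Proof.
rewrite (bigD1 i) //= mxE eqxx addrC mulNr; congr (_ - _).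
by apply: eq_bigr => j ji; rewrite mxE eq_sym (negbTE ji).
Qed.

Lemma dispersal_bound_ge0 : 0 <= dispersal_bound.
Proof. by apply: sumr_ge0 => i _; apply: sumr_ge0 => j _. Qed.

Lemma psum_le_sum (F : 'I_n -> R) (P : pred 'I_n) :
  (forall j, 0 <= F j) -> \sum_(j | P j) F j <= \sum_j F j.
Proof. by move=> F0; rewrite [X in _ <= X](bigID P) /= lerDl sumr_ge0. Qed.

Lemma abs_row_le i : \sum_j `|a i j| <= dispersal_bound.
Proof.
rewrite /dispersal_bound [X in _ <= X](bigD1 i) //= lerDl.
by apply: sumr_ge0 => k _; apply: sumr_ge0.
Qed.

Lemma abs_col_le i : \sum_k `|a k i| <= dispersal_bound.
Proof.
rewrite /dispersal_bound; apply: ler_sum => k _.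
by rewrite (bigD1 i) //= lerDl sumr_ge0.
Qed.

Lemma inflow_sub w w' i : inflow w i - inflow w' i = inflow (fun j => w j - w' j) i.
Proof. by rewrite /inflow -sumrB; apply: eq_bigr => j _; rewrite mulrBr. Qed.

Lemma inflow_norm_le w W i : 0 <= W -> (forall j, `|w j| <= W) ->
  `|inflow w i| <= dispersal_bound * W.
Proof.
move=> W0 hw; apply: le_trans (ler_norm_sum _ _ _) _.
apply: (le_trans (y := \sum_(j | j != i) `|a i j| * W)).
  by apply: ler_sum => j _; rewrite normrM ler_wpM2l.
rewrite -mulr_suml ler_wpM2r //.
exact: le_trans (psum_le_sum _ (fun j => normr_ge0 _)) (abs_row_le i).
Qed.

Hypothesis a_ge0 : forall i j, i != j -> 0 <= a i j.

Lemma outrate_ge0 i : 0 <= outrate i.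
Proof. by apply: sumr_ge0 => k ki; exact: a_ge0. Qed.

Lemma outrate_le i : outrate i <= dispersal_bound.
Proof.
apply: le_trans (abs_col_le i).
apply: le_trans (psum_le_sum _ (fun k => normr_ge0 (a k i))).
by apply: ler_sum => k _; exact: ler_norm.
Qed.

Lemma outrate_bounds i : 0 <= outrate i <= dispersal_bound.
Proof. by rewrite outrate_ge0 outrate_le. Qed.

Lemma inflow_ge0 w i : (forall j, 0 <= w j) -> 0 <= inflow w i.
Proof.
by move=> w0; apply: sumr_ge0 => j ji; rewrite mulr_ge0 // a_ge0 // eq_sym.
Qed.

Lemma inflow_le w W i : (forall j, 0 <= w j <= W) -> inflow w i <= dispersal_bound * W.
Proof.
move=> hw; have W0 : 0 <= W by case/andP: (hw i) => /le_trans; apply.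
have := @inflow_norm_le w W i W0.
rewrite ger0_norm; last by apply: inflow_ge0 => j; case/andP: (hw j).
by apply => j; case/andP: (hw j) => h1 h2; rewrite ger0_norm.
Qed.

End Dispersal.

Section SpeciesEquation.
Variables (R : realType) (n : nat) (a : 'I_n -> 'I_n -> R).
Hypothesis a_ge0 : forall i j, i != j -> 0 <= a i j.

Definition species_eq (r u v : 'I_n -> R) (mu : R) := forall i,
  mu * (inflow a u i - outrate a i * u i) + u i * (r i - u i - v i) = 0.

Lemma equilibriumE p q mu u v :
  is_equilibrium a p q mu u v <-> species_eq p u v mu /\ species_eq q v u mu.
Proof.
have swap i : q i - v i - u i = q i - u i - v i by ring.
split=> [E|[Eu Ev] i].
  by split=> i; have [Eu Ev] := E i; rewrite -conn_matrix_mulE // swap.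
by rewrite !conn_matrix_mulE -swap; split; [exact: Eu | exact: Ev].
Qed.

(* Maximum principle: at a site k where u is maximal the inflow is at most
   dispersal_bound * u_k, so u_k <= r_k + dispersal_bound. *)
Lemma species_upper_bound r u v mu :
  0 < mu -> mu <= 1 -> (forall i, 0 <= r i) -> positive_vec u ->
  (forall i, 0 <= v i) -> species_eq r u v mu ->
  forall j, u j <= \sum_i r i + dispersal_bound a.
Proof.
move=> mu0 mu1 r0 u0 v0 E j.
have [k _ umax] := @arg_maxP _ _ _ j xpredT u isT.
have Ek := E k.
have umax' i : u i <= u k by exact: umax.
have in0 : 0 <= inflow a u k by apply: inflow_ge0 => // i; exact: ltW.
have in_le : inflow a u k <= dispersal_bound a * u k.
  by apply: inflow_le => // i; rewrite umax' ltW.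
have out0 : 0 <= mu * (outrate a k * u k) by rewrite !mulr_ge0 ?outrate_ge0 ?ltW.
have : u k * (u k + v k - r k) <= u k * dispersal_bound a.
  have -> : u k * (u k + v k - r k) = mu * (inflow a u k - outrate a k * u k).
    by rewrite -[RHS]subr0 -Ek; ring.
  have : mu * inflow a u k <= 1 * inflow a u k by rewrite ler_wpM2r.
  rewrite mulrC; nra.
rewrite ler_pM2l // => hk.
have : r k <= \sum_i r i by rewrite (bigD1 k) //= lerDl sumr_ge0.
have := umax' j; have := v0 k; lra.
Qed.

(* Irreducibility propagates positivity: a nonnegative solution that is
   positive somewhere is positive everywhere, since a zero of u at k forces
   u to vanish at every j with a_kj <> 0. *)
Lemma species_positive r u v mu :
  0 < mu -> irreducible_mx (conn_matrix a) -> species_eq r u v mu ->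
  (forall i, 0 <= u i) -> (exists i0, 0 < u i0) -> positive_vec u.
Proof.
move=> mu0 irr E u0 [i0 ui0] i.
rewrite lt_neqAle u0 andbT eq_sym; apply/negP => /eqP ui_eq0.
pose Z := [set k | u k == 0].
have Z0 : Z != set0 by apply/set0Pn; exists i; rewrite inE ui_eq0.
have ZT : Z != [set: 'I_n].
  by apply/negP => /eqP ZT; move: (in_setT i0); rewrite -ZT inE gt_eqF.
have [k [j [kZ jZ akj]]] := irr Z Z0 ZT.
have kj : k != j by apply: contraNneq jZ => <-.
move: akj kZ; rewrite mxE (negbTE kj) inE => akj /eqP uk.
have := E k; rewrite uk mul0r addr0 mulr0 subr0 => /eqP.
rewrite mulf_eq0 gt_eqF //= => /eqP in_k.
have terms_ge0 l : l != k -> 0 <= a k l * u l by move=> lk; rewrite mulr_ge0 // a_ge0 // eq_sym.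
have jk : j != k by rewrite eq_sym.
have /eqP := psumr_eq0P terms_ge0 in_k jk.
by rewrite mulf_eq0 (negbTE akj) /= => /eqP uj; move: jZ; rewrite inE uj eqxx.
Qed.

End SpeciesEquation.

Lemma site_localization (R : realType) (u v r1 r2 mu s1 s2 A al U m : R) :
  0 < mu -> mu <= 1 -> 0 < u -> 0 < v -> u <= U -> 0 <= al -> 0 <= U ->
  0 <= s1 <= al * U -> 0 <= s2 <= al * U -> 0 <= A <= al ->
  u * (u + v - r1) = mu * (s1 - A * u) ->
  v * (u + v - r2) = mu * (s2 - A * v) ->
  0 < m -> m <= 1 -> 0 <= r2 -> m <= r1 - r2 ->
  mu * ((al + 1) * (1 + U)) <= m ^+ 2 / 8 ->
  `|u - r1| <= m /\ v <= m.
Proof.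
move=> mu0 mu1 u0 v0 uU al0 U0 /andP [s10 s1U] /andP [s20 s2U] /andP [A0 Aal]
  Eu Ev m0 m1 r20 mr hmu.
have hc : al * U <= (al + 1) * (1 + U) by nra.
have m2 : m ^+ 2 / 8 <= m / 8 by rewrite expr2; nra.
have muAU : mu * (al * U) <= m / 8 * m by rewrite expr2 in hmu; nra.
have muA : mu * A <= m / 8.
  have : mu * A <= mu * al by rewrite ler_wpM2l; lra.
  have : al <= (al + 1) * (1 + U) by nra.
  nra.
have muAu : 0 <= mu * (A * u) by rewrite !mulr_ge0 //; lra.
have u_lb : 0 <= u + v - r1 + mu * A.
  have E : u * (u + v - r1 + mu * A) = mu * s1 by rewrite mulrDr Eu; ring.
  have : 0 <= mu * s1 by rewrite mulr_ge0 //; lra.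
  rewrite -E => H; nra.
have v_ub : v * (u + v - r2) <= m / 8 * m.
  have : 0 <= mu * (A * v) by rewrite !mulr_ge0 //; lra.
  have : mu * s2 <= mu * (al * U) by rewrite ler_wpM2l //; lra.
  rewrite Ev; lra.
have v_small : v <= m / 7 by nra.
have u_big : u >= m / 2 by nra.
have s1u : mu * s1 <= mu * (al * U) by rewrite ler_wpM2l //; lra.
have Au : mu * (A * u) <= mu * (al * U) by rewrite ler_wpM2l ?ler_pM //; lra.
have : `|u * (u + v - r1)| <= m / 4 * m.
  rewrite Eu; apply/ler_normlP; split; nra.
move=> /ler_normlP [? ?]; have /ler_normlP [? ?] : `|u + v - r1| <= m / 2.
  by apply/ler_normlP; split; nra.
by split; [apply/ler_normlP; split|]; lra.
Qed.

Lemma ratio_lipschitz (R : realType) (s s' d d' S E Dd e m2 : R) :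
  0 < d -> 0 < d' -> 0 < m2 -> m2 <= d * d' ->
  `|s - s'| <= E -> 0 <= s' -> s' <= S -> `|d - d'| <= Dd -> d' <= e ->
  `|s / d - s' / d'| * m2 <= E * e + S * Dd.
Proof.
move=> d0 d'0 m0 md hs s'0 s'S hd d'e.
have E1 : s / d - s' / d' = ((s - s') * d' + s' * (d' - d)) / (d * d').
  by field; apply/andP; split; rewrite gt_eqF.
have dd0 : 0 < d * d' by rewrite mulr_gt0.
rewrite E1 normrM [`|(d * d')^-1|]ger0_norm; last by rewrite invr_ge0 ltW.
apply: (le_trans (y := `|(s - s') * d' + s' * (d' - d)| / (d * d') * (d * d'))).
  apply: ler_wpM2l => //; rewrite divr_ge0 //; exact: ltW.
rewrite divfK ?gt_eqF //.
apply: (le_trans (ler_normD _ _)).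
apply: lerD.
  rewrite normrM (ger0_norm (ltW d'0)); apply: ler_pM => //; exact: ltW.
rewrite normrM (ger0_norm s'0) distrC; apply: ler_pM => //.
Qed.

(* Site equation  mu (s - A x) + x (r - x - y) = 0  for the density x of a
   species with resource r, competitor density y, inflow s and outflow rate A,
   solved for x in two ways: as a fixed point of dominant_update where the
   species wins the competition (x near r) and of recessive_update where it
   loses (x near 0).  Both are contractions for small mu. *)
Definition dominant_update {R : realType} (r x y s A mu : R) := r - y + mu * (s / x - A).
Definition recessive_update {R : realType} (r x y s A mu : R) :=
  mu * s / (x + y - r + mu * A).

Lemma dominant_update_fix (R : realType) (r x y s A mu : R) : 0 < x ->
  (dominant_update r x y s A mu = x <-> mu * (s - A * x) + x * (r - x - y) = 0).
Proof.
move=> x0; have xn : x != 0 by rewrite gt_eqF.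
rewrite /dominant_update; split => H.
  have -> : mu * (s - A * x) = x * (mu * (s / x - A)) by field.
  have -> : mu * (s / x - A) = x - (r - y) by rewrite -[in RHS]H; ring.
  ring.
have E : mu * (s - A * x) = - (x * (r - x - y)) by apply/eqP; rewrite -addr_eq0 H.
have -> : mu * (s / x - A) = (mu * (s - A * x)) / x by field.
by rewrite E; field.
Qed.

Lemma recessive_update_fix (R : realType) (r x y s A mu : R) :
  0 < x + y - r + mu * A ->
  (recessive_update r x y s A mu = x <-> mu * (s - A * x) + x * (r - x - y) = 0).
Proof.
move=> d0; have dn : x + y - r + mu * A != 0 by rewrite gt_eqF.
rewrite /recessive_update; split => H.
  have := congr1 (fun w => w * (x + y - r + mu * A)) H; rewrite /= divfK // => E.
  by rewrite mulrBr E; ring.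
have E : mu * (s - A * x) = - (x * (r - x - y)) by apply/eqP; rewrite -addr_eq0 H.
have -> : mu * s = x * (x + y - r + mu * A).
  by rewrite -[mu * s](subrK (mu * A * x)) -mulrA -mulrBr E; ring.
by field.
Qed.

(* The smallness regime for mu used in the contraction argument: al bounds the
   dispersal rates, B the densities, m the resource margins, and the box has
   radius 2 rho around the dominant equilibrium values. *)
Record small_regime (R : realType) (al B m rho mu : R) : Prop := SmallRegime {
  regime_al : 0 <= al;
  regime_m : 0 < m;
  regime_m1 : m <= 1;
  regime_rho : 0 < rho;
  regime_rho_m : 4 * rho <= m;
  regime_rho_B : rho <= B;
  regime_mu : 0 < mu;
  regime_mu1 : mu <= 1;
  regime_mu_contr : mu * (32 * ((al + 1) * (4 * B + al + 1))) <= m ^+ 2;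
  regime_mu_box : mu * ((al + 1) * (2 * B + 1)) * 4 <= m * rho }.

Section UpdateEstimates.
Variables (R : realType) (al B m rho mu : R).
Hypothesis regime : small_regime al B m rho mu.

Lemma dominant_update_in (r x y s A : R) :
  m <= r -> r + 2 * rho <= B -> `|x - r| <= 2 * rho -> 0 <= y <= rho ->
  0 <= s <= al * B -> 0 <= A <= al ->
  `|dominant_update r x y s A mu - r| <= 2 * rho.
Proof.
move=> mr rB /ler_normlP [hx1 hx2] /andP [y0 yr] /andP [s0 sB] /andP [A0 Aal].
case: regime => al0 m0 m1 rho0 rhom rhoB mu0 mu1 Cc Ci.
have x_lb : m / 2 <= x by lra.
have x_pos : 0 < x by lra.
set t := s / x.
have t_ge0 : 0 <= t by rewrite divr_ge0 //; lra.
have t_x : t * x = s by rewrite /t divfK // gt_eqF.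
have t_m : t * m <= 2 * (al * B) by nra.
have mu_alB : mu * (al * B) * 4 <= m * rho.
  have : al * B <= (al + 1) * (2 * B + 1) by nra.
  nra.
have mu_t : mu * t <= rho / 2.
  have : mu * t * m <= 2 * (mu * (al * B)) by nra.
  nra.
have mu_A : mu * A <= rho / 2.
  have : al <= (al + 1) * (2 * B + 1) by nra.
  have : mu * A <= mu * al by apply: ler_wpM2l; lra.
  nra.
have mu_A_ge0 : 0 <= mu * A by rewrite mulr_ge0 //; lra.
have mu_t_ge0 : 0 <= mu * t by rewrite mulr_ge0 //; lra.
rewrite /dominant_update -/t; apply/ler_normlP; split; lra.
Qed.

Lemma recessive_update_in (r x y py s A : R) :
  0 <= x <= rho -> `|y - py| <= 2 * rho -> m <= py - r ->
  0 <= s <= al * B -> 0 <= A <= al ->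
  0 <= recessive_update r x y s A mu <= rho.
Proof.
move=> /andP [x0 xr] /ler_normlP [hy1 hy2] mpr /andP [s0 sB] /andP [A0 Aal].
case: regime => al0 m0 m1 rho0 rhom rhoB mu0 mu1 Cc Ci.
have mu_A_ge0 : 0 <= mu * A by rewrite mulr_ge0 //; lra.
set d := x + y - r + mu * A.
have d_lb : m / 2 <= d by rewrite /d; lra.
have d_pos : 0 < d by lra.
rewrite /recessive_update -/d.
set t := mu * s / d.
have t_ge0 : 0 <= t by rewrite divr_ge0 //; [rewrite mulr_ge0 //; lra | lra].
have t_d : t * d = mu * s by rewrite /t divfK // gt_eqF.
have mu_alB : mu * (al * B) * 4 <= m * rho.
  have : al * B <= (al + 1) * (2 * B + 1) by nra.
  nra.
have mu_s : mu * s <= mu * (al * B) by apply: ler_wpM2l; lra.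
by rewrite t_ge0 /=; nra.
Qed.

Lemma dominant_update_contr (r x x' y y' s s' A D : R) :
  `|x - r| <= 2 * rho -> `|x' - r| <= 2 * rho -> m <= r -> r + 2 * rho <= B ->
  `|y - y'| <= D / 4 -> 0 <= s <= al * B -> 0 <= s' <= al * B ->
  `|s - s'| <= al * D -> `|x - x'| <= D -> 0 <= D ->
  `|dominant_update r x y s A mu - dominant_update r x' y' s' A mu| <= D / 2.
Proof.
move=> hx hx' mr rB hy /andP [s0 sB] /andP [s'0 s'B] hs hxx D0.
case: regime => al0 m0 m1 rho0 rhom rhoB mu0 mu1 Cc Ci.
move/ler_normlP: (hx) => [hx1 hx2]; move/ler_normlP: (hx') => [hx1' hx2'].
have x_lb : m / 2 <= x by lra.
have x'_lb : m / 2 <= x' by lra.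
have xx'_lb : m ^+ 2 / 4 <= x * x'.
  have -> : m ^+ 2 / 4 = (m / 2) * (m / 2) by rewrite expr2; field.
  apply: ler_pM => //; lra.
have := @ratio_lipschitz R s s' x x' (al * B) (al * D) D B (m ^+ 2 / 4).
move=> /(_ ltac:(lra) ltac:(lra) ltac:(rewrite divr_gt0 // exprn_gt0 //) xx'_lb hs s'0 s'B hxx ltac:(lra)).
set T := `|s / x - s' / x'|.
move=> ratio_diff.
have T_ge0 : 0 <= T by apply: normr_ge0.
have mu_alB : 8 * (mu * (al * B)) <= m ^+ 2 / 4.
  have : al * B <= (al + 1) * (4 * B + al + 1) by nra.
  nra.
have muT_m2 : mu * T * m ^+ 2 <= 8 * (mu * (al * B)) * D.
  have : mu * (T * (m ^+ 2 / 4)) <= mu * (al * D * B + al * B * D) by apply: ler_wpM2l; lra.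
  move=> H; have -> : mu * T * m ^+ 2 = 4 * (mu * (T * (m ^+ 2 / 4))) by field.
  lra.
have muT_m2' : mu * T * m ^+ 2 <= D / 4 * m ^+ 2.
  have : 8 * (mu * (al * B)) * D <= m ^+ 2 / 4 * D by apply: ler_wpM2r.
  lra.
have mu_T : mu * T <= D / 4.
  by rewrite -(ler_pM2r (exprn_gt0 2 m0)).
have -> : dominant_update r x y s A mu - dominant_update r x' y' s' A mu = - (y - y') + mu * (s / x - s' / x').
  by rewrite /dominant_update; ring.
apply: (le_trans (ler_normD _ _)).
rewrite normrN normrM (ger0_norm (ltW mu0)) -/T; lra.
Qed.

(* Contraction of the recessive update: self distance D/4, competitor distance
   D and inflow distance al D give an output distance D/8 = (D/2)/4. *)
Lemma recessive_update_contr (r x x' y y' py s s' A D : R) :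
  0 <= x <= rho -> 0 <= x' <= rho ->
  `|y - py| <= 2 * rho -> `|y' - py| <= 2 * rho -> m <= py - r -> py + 2 * rho <= B ->
  0 <= r -> `|x - x'| <= D / 4 -> `|y - y'| <= D ->
  0 <= s <= al * B -> 0 <= s' <= al * B ->
  `|s - s'| <= al * D -> 0 <= A <= al -> 0 <= D ->
  `|recessive_update r x y s A mu - recessive_update r x' y' s' A mu| <= D / 8.
Proof.
move=> /andP [x0 xr] /andP [x'0 x'r] hy hy' mpr pB r0 hxx hyy /andP [s0 sB] /andP [s'0 s'B] hs /andP [A0 Aal] D0.
case: regime => al0 m0 m1 rho0 rhom rhoB mu0 mu1 Cc Ci.
move/ler_normlP: (hy) => [hy1 hy2]; move/ler_normlP: (hy') => [hy1' hy2'].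
have mu_A_ge0 : 0 <= mu * A by rewrite mulr_ge0 //; lra.
have mu_A_le : mu * A <= al.
  have : mu * A <= 1 * A by apply: ler_wpM2r.
  lra.
set d := x + y - r + mu * A.
set d' := x' + y' - r + mu * A.
have d_lb : m / 2 <= d by rewrite /d; lra.
have d'_lb : m / 2 <= d' by rewrite /d'; lra.
have dd'_lb : m ^+ 2 / 4 <= d * d'.
  have -> : m ^+ 2 / 4 = (m / 2) * (m / 2) by rewrite expr2; field.
  apply: ler_pM => //; lra.
have d_diff : `|d - d'| <= 2 * D.
  have -> : d - d' = (x - x') + (y - y') by rewrite /d /d'; ring.
  apply: (le_trans (ler_normD _ _)); lra.
have := @ratio_lipschitz R s s' d d' (al * B) (al * D) (2 * D) (2 * B + al) (m ^+ 2 / 4).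
move=> /(_ ltac:(lra) ltac:(lra) ltac:(rewrite divr_gt0 // exprn_gt0 //) dd'_lb hs s'0 s'B d_diff ltac:(rewrite /d'; lra)).
set T := `|s / d - s' / d'|.
move=> ratio_diff.
have T_ge0 : 0 <= T by apply: normr_ge0.
have mu_alB : 4 * (mu * (al * (4 * B + al))) <= m ^+ 2 / 8.
  have : al * (4 * B + al) <= (al + 1) * (4 * B + al + 1) by nra.
  nra.
have muT_m2 : mu * T * m ^+ 2 <= 4 * (mu * (al * (4 * B + al))) * D.
  have : mu * (T * (m ^+ 2 / 4)) <= mu * (al * D * (2 * B + al) + al * B * (2 * D)).
    by apply: ler_wpM2l; lra.
  move=> H; have -> : mu * T * m ^+ 2 = 4 * (mu * (T * (m ^+ 2 / 4))) by field.
  have -> : 4 * (mu * (al * (4 * B + al))) * D = 4 * (mu * (al * D * (2 * B + al) + al * B * (2 * D))) by ring.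
  lra.
have muT_m2' : mu * T * m ^+ 2 <= D / 8 * m ^+ 2.
  have : 4 * (mu * (al * (4 * B + al))) * D <= m ^+ 2 / 8 * D by apply: ler_wpM2r.
  lra.
have mu_T : mu * T <= D / 8.
  by rewrite -(ler_pM2r (exprn_gt0 2 m0)).
have -> : recessive_update r x y s A mu - recessive_update r x' y' s' A mu = mu * (s / d - s' / d').
  by rewrite /recessive_update -/d -/d'; ring.
rewrite normrM (ger0_norm (ltW mu0)) -/T; lra.
Qed.

End UpdateEstimates.

Lemma finite_pos_lower_bound (R : realType) (I : finType) (f : I -> R) :
  (forall i, 0 < f i) -> exists m : R, [/\ 0 < m, m <= 1 & forall i, m <= f i].
Proof.
move=> f0; pose S := \sum_i (f i)^-1.
have S0 : 0 <= S by apply: sumr_ge0 => i _; rewrite invr_ge0 ltW.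
exists (1 + S)^-1; split; first by rewrite invr_gt0; lra.
  by rewrite invf_le1; lra.
move=> i; rewrite -[f i]invrK lef_pV2 ?posrE ?invr_gt0 //; last lra.
have : (f i)^-1 <= S by rewrite /S (bigD1 i) //= lerDl sumr_ge0 // => j _; rewrite invr_ge0 ltW.
lra.
Qed.

Section Competition.
Variables (R : realType) (n : nat) (a : 'I_n -> 'I_n -> R) (p q : 'I_n -> R).
Hypotheses (a_ge0 : forall i j, i != j -> 0 <= a i j)
  (p_pos : positive_vec p) (q_pos : positive_vec q)
  (p_neq_q : forall i, (q i < p i) || (p i < q i)).

Definition resource (s : bool) : 'I_n -> R := if s then p else q.
Definition dominates (s : bool) (i : 'I_n) := resource (~~ s) i < resource s i.

Lemma dominates_neg s i : dominates (~~ s) i = ~~ dominates s i.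
Proof.
by case: s; rewrite /dominates /=; case: ltgtP (p_neq_q i).
Qed.

Lemma resource_pos s i : 0 < resource s i.
Proof. by case: s; [exact: p_pos | exact: q_pos]. Qed.

Lemma resource_le_sum s i : resource s i <= \sum_j p j + \sum_j q j.
Proof.
have sum_ge (f : 'I_n -> R) : positive_vec f -> f i <= \sum_j f j.
  by move=> f0; rewrite (bigD1 i) //= lerDl sumr_ge0 // => j _; exact: ltW.
have := sum_ge p p_pos; have := sum_ge q q_pos.
have : 0 <= \sum_j p j by apply: sumr_ge0 => j _; exact: ltW.
have : 0 <= \sum_j q j by apply: sumr_ge0 => j _; exact: ltW.
by case: s => /=; lra.
Qed.

Lemma resource_margin : exists m : R, [/\ 0 < m, m <= 1 &
  forall s i, m <= resource s i /\ (dominates s i -> m <= resource s i - resource (~~ s) i)].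
Proof.
have := @finite_pos_lower_bound R _ (fun i => Num.min (Num.min (p i) (q i)) `|p i - q i|).
case=> [i|m [m0 m1 hm]].
  rewrite !lt_min p_pos q_pos normr_gt0 subr_eq0 /=.
  by case: ltgtP (p_neq_q i).
exists m; split => // s i; have := hm i; rewrite !le_min => /andP [/andP [mp mq] mpq].
split; first by case: s.
by case: s; rewrite /dominates /= => lt; move: mpq;
  [rewrite gtr0_norm ?subr_gt0 | rewrite distrC gtr0_norm ?subr_gt0].
Qed.

Definition species (z : bool * 'I_n -> R) (s : bool) : 'I_n -> R := fun i => z (s, i).
Definition of_pair (u v : 'I_n -> R) : bool * 'I_n -> R :=
  fun t => if t.1 then u t.2 else v t.2.

Definition state_eq (mu : R) (z : bool * 'I_n -> R) := forall s,
  species_eq a (resource s) (species z s) (species z (~~ s)) mu.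

Lemma pos_equilibrium_state mu u v :
  is_pos_equilibrium a p q mu u v <->
  state_eq mu (of_pair u v) /\ forall t, 0 < of_pair u v t.
Proof.
rewrite /is_pos_equilibrium equilibriumE; split.
  move=> [[Eu Ev] [pu pv]]; split; first by case; [exact: Eu | exact: Ev].
  by case=> [[] i]; [exact: pu | exact: pv].
move=> [E P]; split; first by split; [exact: (E true) | exact: (E false)].
by split=> i; [exact: (P (true, i)) | exact: (P (false, i))].
Qed.
Lemma site_eq_rearranged mu z s i : state_eq mu z ->
  z (s, i) * (z (s, i) + z (~~ s, i) - resource s i) =
  mu * (inflow a (species z s) i - outrate a i * z (s, i)).
Proof. by move=> E; rewrite -[RHS]subr0 -(E s i); rewrite /species; ring. Qed.

Lemma state_upper_bound mu z : 0 < mu -> mu <= 1 -> state_eq mu z ->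
  (forall t, 0 < z t) -> forall t, z t <= \sum_j p j + \sum_j q j + dispersal_bound a.
Proof.
move=> mu0 mu1 E z0 [s j].
have r0 i : 0 <= resource s i by exact: ltW (resource_pos _ _).
have := species_upper_bound a_ge0 mu0 mu1 r0 (fun i => z0 (s, i))
  (fun i => ltW (z0 (~~ s, i))) (E s) j.
have : \sum_i resource s i <= \sum_i p i + \sum_i q i.
  have : 0 <= \sum_i p i by apply: sumr_ge0 => i _; exact: ltW (p_pos i).
  have : 0 <= \sum_i q i by apply: sumr_ge0 => i _; exact: ltW (q_pos i).
  by case: s {E r0} => /=; lra.
rewrite /species /=; lra.
Qed.

Lemma equilibrium_localized rho : 0 < rho -> exists eta : R, 0 < eta /\
  forall mu z, 0 < mu < eta -> state_eq mu z -> (forall t, 0 < z t) ->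
  forall s i, dominates s i -> `|z (s, i) - resource s i| <= rho /\ z (~~ s, i) <= rho.
Proof.
move=> rho0; have [m [m0 m1 margin]] := resource_margin.
pose m' := Num.min m rho.
have m'0 : 0 < m' by rewrite lt_min m0.
have m'm : m' <= m by rewrite ge_min lexx.
have m'rho : m' <= rho by rewrite ge_min lexx orbT.
pose al := dispersal_bound a; pose U := \sum_j p j + \sum_j q j + al.
have al0 : 0 <= al := dispersal_bound_ge0 a.
have U0 : 0 <= U.
  have : 0 <= \sum_j p j by apply: sumr_ge0 => i _; exact: ltW (p_pos i).
  have : 0 <= \sum_j q j by apply: sumr_ge0 => i _; exact: ltW (q_pos i).
  rewrite /U; lra.
have c0 : 0 < (al + 1) * (1 + U) by rewrite mulr_gt0 //; lra.
exists (Num.min 1 (m' ^+ 2 / 8 / ((al + 1) * (1 + U)))); split.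
  by rewrite lt_min ltr01 /= !divr_gt0 // exprn_gt0.
move=> mu z /andP [mu0]; rewrite lt_min => /andP [mu1 mu_small] E z0 s i dom.
have mu_le : mu * ((al + 1) * (1 + U)) <= m' ^+ 2 / 8 by rewrite -ler_pdivlMr // ltW.
have zU t : z t <= U := state_upper_bound mu0 (ltW mu1) E z0 t.
have z_ge0 t : 0 <= z t by exact: ltW.
have inflow_bounds s' : 0 <= inflow a (species z s') i <= al * U.
  by apply/andP; split; [apply: inflow_ge0 | apply: inflow_le] => // j; rewrite ?z_ge0 ?zU.
have [_ mmargin] := margin s i.
have Eo := site_eq_rearranged (~~ s) i E; rewrite negbK in Eo.
have := @site_localization R (z (s, i)) (z (~~ s, i)) (resource s i) (resource (~~ s) i)
  mu (inflow a (species z s) i) (inflow a (species z (~~ s)) i) (outrate a i) al U m'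
  mu0 (ltW mu1) (z0 _) (z0 _) (zU _) al0 U0 (inflow_bounds s) (inflow_bounds (~~ s))
  (outrate_bounds a_ge0 i) (site_eq_rearranged s i E) ltac:(by rewrite -Eo; ring)
  m'0 ltac:(lra) (ltW (resource_pos _ _)) ltac:(by have := mmargin dom; lra) mu_le.
by move=> [/ler_normlP [? ?] ?]; split; [apply/ler_normlP; split|]; lra.
Qed.

Definition density_bound := \sum_j p j + \sum_j q j + 1.

Definition box_lo (rho : R) (t : bool * 'I_n) : R :=
  if dominates t.1 t.2 then resource t.1 t.2 - 2 * rho else 0.
Definition box_hi (rho : R) (t : bool * 'I_n) : R :=
  if dominates t.1 t.2 then resource t.1 t.2 + 2 * rho else rho.
Definition box_weight (t : bool * 'I_n) : R := if dominates t.1 t.2 then 1 else 4^-1.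

Definition update (mu : R) (z : bool * 'I_n -> R) (t : bool * 'I_n) : R :=
  let: (s, i) := t in
  if dominates s i
  then dominant_update (resource s i) (z (s, i)) (z (~~ s, i))
         (inflow a (species z s) i) (outrate a i) mu
  else recessive_update (resource s i) (z (s, i)) (z (~~ s, i))
         (inflow a (species z s) i) (outrate a i) mu.

Section BoxMap.
Variables (m rho mu : R).
Hypothesis margin : forall s i,
  m <= resource s i /\ (dominates s i -> m <= resource s i - resource (~~ s) i).
Hypothesis regime : small_regime (dispersal_bound a) density_bound m rho mu.

Local Notation K := (in_box (box_lo rho) (box_hi rho)).
Local Notation close := (close box_weight).

Lemma box_site z s i : K z -> dominates s i ->
  `|z (s, i) - resource s i| <= 2 * rho /\ 0 <= z (~~ s, i) <= rho.
Proof.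
move=> Kz dom; have := Kz (s, i); have := Kz (~~ s, i).
rewrite /box_lo /box_hi /= dominates_neg dom /= => -> /andP [? ?].
by split=> //; apply/ler_normlP; split; lra.
Qed.

Lemma box_density z t : K z -> 0 <= z t <= density_bound.
Proof.
case: regime => _ m0 m1 rho0 rhom _ _ _ _ _ Kz.
case: t => s i; have [mr _] := margin s i; have rS := resource_le_sum s i.
by have := Kz (s, i); rewrite /box_lo /box_hi /density_bound /=;
  case: ifP => _ /andP [? ?]; apply/andP; split; lra.
Qed.

Lemma box_inflow z s i : K z ->
  0 <= inflow a (species z s) i <= dispersal_bound a * density_bound.
Proof.
move=> Kz; apply/andP; split.
  by apply: inflow_ge0 => // j; case/andP: (box_density (s, j) Kz).
by apply: inflow_le => // j; exact: (box_density (s, j) Kz).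
Qed.

Lemma box_diameter z z' : K z -> K z' -> close z z' (4 * rho).
Proof.
case: regime => _ _ _ rho0 _ _ _ _ _ _ Kz Kz' [s i].
have := Kz (s, i); have := Kz' (s, i); rewrite /box_lo /box_hi /box_weight /=.
by case: ifP => _ /andP [? ?] /andP [? ?]; apply/ler_normlP; split; lra.
Qed.

Lemma close_site z z' D s i : close z z' D -> dominates s i ->
  `|z (s, i) - z' (s, i)| <= D /\ `|z (~~ s, i) - z' (~~ s, i)| <= D / 4.
Proof.
move=> C dom; have := C (s, i); have := C (~~ s, i).
by rewrite /box_weight /= dominates_neg dom /= mulr1.
Qed.

Lemma close_le z z' D : 0 <= D -> close z z' D -> forall t, `|z t - z' t| <= D.
Proof.
move=> D0 C t; apply: le_trans (C t) _; rewrite /box_weight.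
by case: ifP => _; rewrite ?mulr1 // ler_piMr // invf_le1; lra.
Qed.

Lemma resource_room s i : resource s i + 2 * rho <= density_bound.
Proof. by case: regime => *; have := resource_le_sum s i; rewrite /density_bound; lra. Qed.

Lemma update_box z : K z -> K (update mu z).
Proof.
move=> Kz [s i]; have [mr _] := margin s i.
rewrite /update /box_lo /box_hi /=; case: ifP => dom.
  have [zx zy] := box_site Kz dom.
  have /ler_normlP [? ?] := dominant_update_in regime mr (resource_room s i) zx zy
    (box_inflow s i Kz) (outrate_bounds a_ge0 i).
  by apply/andP; split; lra.
have dom' : dominates (~~ s) i by rewrite dominates_neg dom.
have [zy zx] := box_site Kz dom'; rewrite negbK in zx.
have [_ /(_ dom')] := margin (~~ s) i; rewrite negbK => mm.
exact: (recessive_update_in regime zx zy mm (box_inflow s i Kz) (outrate_bounds a_ge0 i)).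
Qed.

Lemma close_inflow z z' D s i : 0 <= D -> close z z' D ->
  `|inflow a (species z s) i - inflow a (species z' s) i| <= dispersal_bound a * D.
Proof.
move=> D0 C; rewrite inflow_sub; apply: inflow_norm_le => // j.
exact: (close_le D0 C (s, j)).
Qed.

Lemma update_contr z z' D : K z -> K z' -> 0 <= D -> close z z' D ->
  close (update mu z) (update mu z') (D / 2).
Proof.
move=> Kz Kz' D0 C [s i]; have [mr _] := margin s i.
rewrite /update /box_weight /=; case: ifP => dom.
  have [zx zy] := box_site Kz dom; have [zx' zy'] := box_site Kz' dom.
  have [Cx Cy] := close_site C dom.
  rewrite mulr1; exact: (dominant_update_contr regime (outrate a i) zx zx' mr (resource_room s i) Cy
    (box_inflow s i Kz) (box_inflow s i Kz') (close_inflow s i D0 C) Cx D0).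
have dom' : dominates (~~ s) i by rewrite dominates_neg dom.
have [zy zx] := box_site Kz dom'; have [zy' zx'] := box_site Kz' dom'.
have [Cy Cx] := close_site C dom'.
rewrite negbK in zx zx' Cx.
have [_ /(_ dom')] := margin (~~ s) i; rewrite negbK => mm.
have -> : D / 2 * 4^-1 = D / 8 by field.
exact: (recessive_update_contr regime zx zx' zy zy' mm (resource_room (~~ s) i)
  (ltW (resource_pos _ _)) Cx Cy (box_inflow s i Kz) (box_inflow s i Kz')
  (close_inflow s i D0 C) (outrate_bounds a_ge0 i) D0).
Qed.

Lemma update_fixE z : K z -> update mu z = z <-> state_eq mu z.
Proof.
have [_ m0 _ rho0 rhom _ mu0 _ _ _] := regime.
move=> Kz; pose site_eq s i := mu * (inflow a (species z s) i - outrate a i * z (s, i))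
  + z (s, i) * (resource s i - z (s, i) - z (~~ s, i)) = 0.
have fixE s i : update mu z (s, i) = z (s, i) <-> site_eq s i.
  have [mr _] := margin s i.
  rewrite /update /=; case: ifP => dom.
    have [/ler_normlP [? ?] _] := box_site Kz dom.
    by apply: dominant_update_fix; lra.
  have dom' : dominates (~~ s) i by rewrite dominates_neg dom.
  have [/ler_normlP [? ?] zx] := box_site Kz dom'; rewrite negbK in zx.
  have [_ /(_ dom')] := margin (~~ s) i; rewrite negbK => mm.
  have : 0 <= mu * outrate a i by rewrite mulr_ge0 ?outrate_ge0 // ltW.
  case/andP: zx => ? ? ?.
  by apply: recessive_update_fix; lra.
split=> [Fz s i | E].
  by apply/fixE; rewrite Fz.
by apply: functional_extensionality => -[s i]; apply/fixE; exact: E.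
Qed.

End BoxMap.

Lemma limit_state_in_box rho : 0 <= rho ->
  in_box (box_lo rho) (box_hi rho) (of_pair (u0 p q) (v0 p q)).
Proof.
move=> rho0 [[] i]; rewrite /of_pair /u0 /v0 /box_lo /box_hi /dominates /=;
  by case: ifP => _; rewrite ?lexx /=; lra.
Qed.

Lemma species_of_pair z : of_pair (species z true) (species z false) = z.
Proof. by apply: functional_extensionality => -[[] i]. Qed.

Lemma small_regime_eventually m rho : 0 < m -> m <= 1 -> 0 < rho -> 4 * rho <= m ->
  exists eta : R, 0 < eta /\
    forall mu, 0 < mu < eta -> small_regime (dispersal_bound a) density_bound m rho mu.
Proof.
move=> m0 m1 rho0 rhom; set al := dispersal_bound a; set B := density_bound.
have al0 : 0 <= al := dispersal_bound_ge0 a.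
have B1 : 1 <= B.
  have : 0 <= \sum_j p j by apply: sumr_ge0 => j _; exact: ltW (p_pos j).
  have : 0 <= \sum_j q j by apply: sumr_ge0 => j _; exact: ltW (q_pos j).
  rewrite /B /density_bound; lra.
pose K1 := 32 * ((al + 1) * (4 * B + al + 1)); pose K2 := (al + 1) * (2 * B + 1) * 4.
have K10 : 0 < K1 by rewrite /K1 !mulr_gt0 //; lra.
have K20 : 0 < K2 by rewrite /K2 !mulr_gt0 //; lra.
exists (Num.min 1 (Num.min (m ^+ 2 / K1) (m * rho / K2))); split.
  by rewrite !lt_min ltr01 /= !divr_gt0 // ?exprn_gt0 ?mulr_gt0.
move=> mu /andP [mu0]; rewrite !lt_min => /andP [mu1 /andP [muK1 muK2]].
rewrite ltr_pdivlMr // /K1 in muK1; rewrite ltr_pdivlMr // /K2 in muK2.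
by split=> //; lra.
Qed.

Lemma localized_in_box rho z : (forall t, 0 < z t) ->
  (forall s i, dominates s i -> `|z (s, i) - resource s i| <= rho /\ z (~~ s, i) <= rho) ->
  in_box (box_lo rho) (box_hi rho) z.
Proof.
move=> z0 loc [s i]; rewrite /box_lo /box_hi /=; case: ifP => dom.
  by have [/ler_normlP [? ?] _] := loc s i dom; apply/andP; split; lra.
have dom' : dominates (~~ s) i by rewrite dominates_neg dom.
have [/ler_normlP [? ?]] := loc _ _ dom'; rewrite negbK => zx.
by rewrite zx andbT ltW.
Qed.

Lemma limit_profileE s i :
  of_pair (u0 p q) (v0 p q) (s, i) = if dominates s i then resource s i else 0.
Proof. by case: s. Qed.

Lemma equilibrium_limit eps : 0 < eps -> exists eta : R, 0 < eta /\
  forall mu u v, 0 < mu < eta -> is_pos_equilibrium a p q mu u v ->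
  forall t, `|of_pair u v t - of_pair (u0 p q) (v0 p q) t| < eps.
Proof.
move=> eps0; have [eta [eta0 loc]] := @equilibrium_localized (eps / 2) ltac:(lra).
exists eta; split => // mu u v mu_eta /pos_equilibrium_state [E P] [s i].
have {}loc := loc mu _ mu_eta E P.
rewrite limit_profileE; case: ifP => dom.
  by have [/ler_normlP [? ?] _] := loc s i dom; apply/ltr_normlP; split; lra.
have dom' : dominates (~~ s) i by rewrite dominates_neg dom.
have [_] := loc _ _ dom'; rewrite negbK subr0 gtr0_norm //; lra.
Qed.

Section SmallDiffusion.
Hypotheses (irr : irreducible_mx (conn_matrix a))
  (u_dominates : exists i, dominates true i) (v_dominates : exists i, dominates false i).

(* An equilibrium in the box is positive: each species is bounded away from 0
   where it dominates, hence positive everywhere by irreducibility. *)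
Lemma box_equilibrium_positive rho mu z : 0 < mu ->
  (forall s i, 2 * rho < resource s i) -> in_box (box_lo rho) (box_hi rho) z ->
  state_eq mu z -> forall t, 0 < z t.
Proof.
move=> mu0 rho_small Kz E [s i].
have [i0 dom0] : exists i0, dominates s i0 by case: s.
apply: (species_positive a_ge0 mu0 irr (E s)) => [j|].
  have := Kz (s, j); rewrite /box_lo /species /=; case: ifP => _ /andP [? _] //.
  by have := rho_small s j; lra.
exists i0; have [/ler_normlP [? ?] _] := box_site Kz dom0.
by have := rho_small s i0; rewrite /species; lra.
Qed.

(* For mu small the box map has a fixed point; it is a positive equilibrium by
   irreducibility, and it is the only one since all positive equilibria are
   localized in the box. *)
Lemma unique_pos_equilibrium : exists delta : R, 0 < delta /\
  forall mu, 0 < mu < delta -> exists u v, is_pos_equilibrium a p q mu u v /\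
    forall u' v', is_pos_equilibrium a p q mu u' v' -> u' = u /\ v' = v.
Proof.
have [m [m0 m1 margin]] := resource_margin.
have [rho [rho0 rhom]] : exists rho : R, 0 < rho /\ 4 * rho = m by exists (m / 4); split; lra.
have rho_small s i : 2 * rho < resource s i by have [? _] := margin s i; lra.
have [etaR [etaR0 regime]] := small_regime_eventually m0 m1 rho0 ltac:(lra).
have [etaL [etaL0 loc]] := equilibrium_localized rho0.
exists (Num.min etaL etaR); split => [|mu]; first by rewrite lt_min etaL0.
move=> /andP [mu0]; rewrite lt_min => /andP [muL muR].
have reg := regime mu ltac:(by rewrite mu0 muR).
have D0 : 0 <= 4 * rho by lra.
have [z [Kz Fz]] := box_fixpoint_exists D0 (box_diameter reg)
  (update_box margin reg) (update_contr margin reg) (limit_state_in_box (ltW rho0)).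
have Ez := (update_fixE margin reg Kz).1 Fz.
exists (species z true), (species z false); split.
  apply/pos_equilibrium_state; rewrite species_of_pair.
  by split=> //; exact: box_equilibrium_positive mu0 rho_small Kz Ez.
move=> u' v' /pos_equilibrium_state [E' P'].
have K' := localized_in_box P' (loc mu _ ltac:(by rewrite mu0 muL) E' P').
have F' := (update_fixE margin reg K').2 E'.
by rewrite -(box_fixpoint_unique D0 (box_diameter reg)
  (update_box margin reg) (update_contr margin reg) K' Kz F' Fz).
Qed.

End SmallDiffusion.
End Competition.

Unset Implicit Arguments. Set Strict Implicit. Set Printing Implicit Defensive.

Theorem theorem4p5 (R : realType) (n : nat) (a : 'I_n -> 'I_n -> R)
    (p q : 'I_n -> R) :
  (2 <= n)%N ->
  (forall i j, i != j -> 0 <= a i j) ->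
  irreducible_mx (conn_matrix a) ->
  cycle_balanced a ->
  positive_vec p -> positive_vec q ->
  (exists i, q i < p i) -> (exists i, p i < q i) ->
  (forall i, (q i < p i) || (p i < q i)) ->
  exists delta : R, 0 < delta /\
    (forall mu, 0 < mu < delta ->
       exists u v, is_pos_equilibrium a p q mu u v /\
         forall u' v', is_pos_equilibrium a p q mu u' v' -> u' = u /\ v' = v) /\
    (forall eps : R, 0 < eps -> exists eta : R, 0 < eta /\
       forall mu u v, 0 < mu < eta -> is_pos_equilibrium a p q mu u v ->
         forall i, `|u i - u0 p q i| < eps /\ `|v i - v0 p q i| < eps).
Proof.
move=> _ a_ge0 irr _ p_pos q_pos u_dom v_dom p_neq_q.
have [delta [delta0 unique]] :=
  unique_pos_equilibrium a_ge0 p_pos q_pos p_neq_q irr u_dom v_dom.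
exists delta; split => //; split => // eps eps0.
have [eta [eta0 limit]] := equilibrium_limit a_ge0 p_pos q_pos p_neq_q eps0.
exists eta; split => // mu u v mu_eta PE i.
have := limit mu u v mu_eta PE.
by move=> close_limit; split; [exact: (close_limit (true, i)) | exact: (close_limit (false, i))].
Qed.
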